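(* If $(X,(f_n))$ is a complex situation, then $A^f$ is a $\Sigma^0_2$ digraph on $X$ of uncountable Borel chromatic number.
   Context: For a sequence $(f_n)$ of partial functions, $A^f:=\bigcup_n\mathrm{Graph}(f_n)$. A complex situation is a pair $(X,(f_n)_{n\in\omega})$ where $X$ is a nonempty Polish space, each $f_n$ is a partial continuous open map on $X$ whose domain and range are open in $X$, and $\Delta(X)\subseteq\overline{A^f}\setminus A^f$ ($\Delta(X)$ the diagonal). A digraph is a relation disjoint from the diagonal; its Borel chromatic number is the least cardinality of a Polish $Y$ admitting a Borel $c:X\to Y$ with $c(x)\neq c(x')$ for $(x,x')$ in the relation. *)

From Stdlib Require Import Reals.
Open Scope R_scope.

Record Polish := {
  carrier :> Type;
  dist : carrier -> carrier -> R;
  dist_nonneg : forall x y, 0 <= dist x y;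
  dist_eq0 : forall x y, dist x y = 0 <-> x = y;
  dist_sym : forall x y, dist x y = dist y x;
  dist_tri : forall x y z, dist x z <= dist x y + dist y z;
  dist_complete : forall u : nat -> carrier,
    (forall eps, 0 < eps -> exists N, forall m n, (N <= m)%nat -> (N <= n)%nat ->
        dist (u m) (u n) < eps) ->
    exists l, forall eps, 0 < eps -> exists N, forall n, (N <= n)%nat -> dist (u n) l < eps;
  (* countable dense subset (possibly empty, allowing the empty space) *)
  dist_separable : exists s : nat -> option carrier,
    forall x eps, 0 < eps -> exists n y, s n = Some y /\ dist x y < eps
}.

Arguments dist {p} _ _.

Definition is_open {X : Polish} (U : X -> Prop) : Prop :=
  forall x, U x -> exists eps, 0 < eps /\ forall y, dist x y < eps -> U y.

Definition is_open2 {X : Polish} (U : X -> X -> Prop) : Prop :=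
  forall x y, U x y -> exists eps, 0 < eps /\
    forall x' y', dist x x' < eps -> dist y y' < eps -> U x' y'.

Definition is_closed2 {X : Polish} (F : X -> X -> Prop) : Prop :=
  is_open2 (fun x y => ~ F x y).

Definition Sigma02 {X : Polish} (A : X -> X -> Prop) : Prop :=
  exists F : nat -> X -> X -> Prop, (forall n, is_closed2 (F n)) /\
    forall x y, A x y <-> exists n, F n x y.

Definition closure2 {X : Polish} (A : X -> X -> Prop) (x y : X) : Prop :=
  forall eps, 0 < eps -> exists x' y', dist x x' < eps /\ dist y y' < eps /\ A x' y'.

Definition borel {X : Polish} (B : X -> Prop) : Prop :=
  forall S : (X -> Prop) -> Prop,
    (forall U, is_open U -> S U) ->
    (forall A, S A -> S (fun x => ~ A x)) ->
    (forall An : nat -> X -> Prop, (forall n, S (An n)) -> S (fun x => exists n, An n x)) ->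
    (forall A A', (forall x, A x <-> A' x) -> S A -> S A') ->
    S B.

Definition borel_fun {X Y : Polish} (c : X -> Y) : Prop :=
  forall V : Y -> Prop, is_open V -> borel (fun x => V (c x)).

Definition countable_type (T : Type) : Prop :=
  exists g : T -> nat, forall a b, g a = g b -> a = b.

(* A partial map on X: a domain together with a function (values outside the domain irrelevant) *)
Definition range {X : Polish} (dom : X -> Prop) (f : X -> X) (y : X) : Prop :=
  exists x, dom x /\ f x = y.

Definition partial_cont_open {X : Polish} (dom : X -> Prop) (f : X -> X) : Prop :=
  is_open dom /\ is_open (range dom f) /\
  (forall x, dom x -> forall eps, 0 < eps -> exists del, 0 < del /\
     forall x', dom x' -> dist x x' < del -> dist (f x) (f x') < eps) /\
  (forall U : X -> Prop, is_open U -> (forall x, U x -> dom x) ->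
     is_open (fun y => exists x, U x /\ f x = y)).

Definition graph {X : Polish} (dom : X -> Prop) (f : X -> X) (x y : X) : Prop :=
  dom x /\ f x = y.

Definition Af {X : Polish} (dom : nat -> X -> Prop) (f : nat -> X -> X) (x y : X) : Prop :=
  exists n, graph (dom n) (f n) x y.

Definition complex_situation (X : Polish) (dom : nat -> X -> Prop) (f : nat -> X -> X) : Prop :=
  inhabited X /\
  (forall n, partial_cont_open (dom n) (f n)) /\
  (forall x, closure2 (Af dom f) x x /\ ~ Af dom f x x).

Definition digraph {X : Polish} (A : X -> X -> Prop) : Prop := forall x, ~ A x x.

Definition uncountable_borel_chromatic {X : Polish} (A : X -> X -> Prop) : Prop :=
  forall (Y : Polish) (c : X -> Y), countable_type Y -> borel_fun c ->
    exists x x', A x x' /\ c x = c x'.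

From Pilot Require Import Defs.
From Stdlib Require Import Reals Lra Lia Classical ClassicalEpsilon Cantor.
Import Defs. (* so that [dist] is the metric of [Polish], not [Rlimit.dist] *)
Open Scope R_scope.

(* A Borel colouring of X into a countable space has fibres with the Baire property, so by the
   Baire category theorem some fibre is comeager in a nonempty open set U.  As the diagonal lies
   in the closure of A^f, some f_n maps a point of U into U, hence a nonempty open V inside U into
   U; since f_n is continuous and open, preimages of meager sets are meager in V, so a generic z
   in V has both z and f_n z in that fibre, a monochromatic edge of A^f.  A^f is Sigma^0_2
   because the graph of f_n over the points at distance at least 1/k from the complement of its
   domain is closed. *)

Definition continuous_on {X : Polish} (D : X -> Prop) (f : X -> X) : Prop :=
  forall x, D x -> forall eps, 0 < eps -> exists del, 0 < del /\
    forall x', D x' -> dist x x' < del -> dist (f x) (f x') < eps.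

Definition nowhere_dense {X : Polish} (N : X -> Prop) : Prop :=
  forall U, is_open U -> (exists x, U x) ->
    exists V, is_open V /\ (exists x, V x) /\ (forall x, V x -> U x /\ ~ N x).

Definition meager {X : Polish} (M : X -> Prop) : Prop :=
  exists N : nat -> X -> Prop, (forall k, nowhere_dense (N k)) /\
    forall x, M x -> exists k, N k x.

Definition baire_property {X : Polish} (A : X -> Prop) : Prop :=
  exists U, is_open U /\ meager (fun x => (A x /\ ~ U x) \/ (U x /\ ~ A x)).

Definition exterior {X : Polish} (U : X -> Prop) (x : X) : Prop :=
  exists e, 0 < e /\ forall y, dist x y < e -> ~ U y.

Definition deep_in {X : Polish} (D : X -> Prop) (r : R) (x : X) : Prop :=
  forall z, dist x z < r -> D z.

Section Topology.
Context {X : Polish}.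

Lemma dist_refl (x : X) : dist x x = 0.
Proof. apply (proj2 (dist_eq0 X x x)); reflexivity. Qed.

Lemma dist_pos (x y : X) : x <> y -> 0 < dist x y.
Proof.
  intros Hxy. destruct (dist_nonneg X x y) as [Hlt | Heq]; [exact Hlt |].
  exfalso; apply Hxy, (dist_eq0 X); auto.
Qed.

Lemma open_ball (x : X) (r : R) : is_open (fun y => dist x y < r).
Proof.
  intros y Hy. exists (r - dist x y). split; [lra |].
  intros z Hz. pose proof (dist_tri X x y z). lra.
Qed.

Lemma open_and (U V : X -> Prop) : is_open U -> is_open V -> is_open (fun x => U x /\ V x).
Proof.
  intros HU HV x [Ux Vx].
  destruct (HU x Ux) as [e1 [He1 H1]], (HV x Vx) as [e2 [He2 H2]].
  exists (Rmin e1 e2). split; [apply Rmin_pos; auto |].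
  intros y Hy. pose proof (Rmin_l e1 e2). pose proof (Rmin_r e1 e2).
  split; [apply H1 | apply H2]; lra.
Qed.

Lemma open_preimage (D O : X -> Prop) (f : X -> X) :
  is_open D -> is_open O -> continuous_on D f -> is_open (fun z => D z /\ O (f z)).
Proof.
  intros HD HO Hf z [Dz Oz].
  destruct (HD z Dz) as [e1 [He1 H1]], (HO (f z) Oz) as [e2 [He2 H2]].
  destruct (Hf z Dz e2 He2) as [del [Hdel H3]].
  exists (Rmin e1 del). split; [apply Rmin_pos; auto |].
  intros y Hy. pose proof (Rmin_l e1 del). pose proof (Rmin_r e1 del).
  assert (Dy : D y) by (apply H1; lra).
  split; [exact Dy | apply H2, H3; auto; lra].
Qed.

Lemma open_exterior (U : X -> Prop) : is_open (exterior U).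
Proof.
  intros x [e [He Hball]]. exists e. split; [exact He |].
  intros y Hy. exists (e - dist x y). split; [lra |].
  intros z Hz. apply Hball. pose proof (dist_tri X x y z). lra.
Qed.

Lemma edge_near_diagonal (A : X -> X -> Prop) (U : X -> Prop) (x : X) :
  is_open U -> U x -> closure2 A x x -> exists x' y', U x' /\ U y' /\ A x' y'.
Proof.
  intros HU Ux Hcl. destruct (HU x Ux) as [e [He Hball]].
  destruct (Hcl e He) as [x' [y' [Hx' [Hy' Hxy']]]].
  exists x', y'. auto.
Qed.

End Topology.

Section Category.
Context {X : Polish}.

Lemma nowhere_dense_frontier (U : X -> Prop) :
  is_open U -> nowhere_dense (fun x => ~ U x /\ ~ exterior U x).
Proof.
  intros HU W HW [w Ww].
  destruct (classic (exists z, W z /\ U z)) as [[z [Wz Uz]] | HWU].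
  - exists (fun x => W x /\ U x). split; [apply open_and; auto |].
    split; [exists z; auto |]. tauto.
  - exists W. split; [exact HW | split; [exists w; exact Ww |]].
    intros x Wx. split; [exact Wx |]. intros [_ Hext]. apply Hext.
    destruct (HW x Wx) as [e [He Hball]]. exists e. split; [exact He |].
    intros y Hy Uy. apply HWU. exists y; auto.
Qed.

Lemma meager_subset (M M' : X -> Prop) : meager M -> (forall x, M' x -> M x) -> meager M'.
Proof. intros [N [HN Hcov]] Hsub. exists N. split; auto. Qed.

Lemma meager_empty : meager (fun _ : X => False).
Proof.
  exists (fun _ _ => False). split; [| tauto].
  intros _ U HU Hne. exists U. auto.
Qed.

Lemma meager_nowhere_dense (N : X -> Prop) : nowhere_dense N -> meager N.
Proof. intros HN. exists (fun _ => N). split; [auto | intros x Nx; exists O; exact Nx]. Qed.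

Lemma meager_nat_union (M : nat -> X -> Prop) :
  (forall i, meager (M i)) -> meager (fun x => exists i, M i x).
Proof.
  intros HM. destruct (choice _ HM) as [N HN].
  exists (fun m x => let (i, k) := of_nat m in N i k x). split.
  - intro m. destruct (of_nat m) as [i k]. apply HN.
  - intros x [i Mix]. destruct (proj2 (HN i) x Mix) as [k Hk].
    exists (to_nat (i, k)). rewrite cancel_of_to. exact Hk.
Qed.

Lemma meager_union (M1 M2 : X -> Prop) :
  meager M1 -> meager M2 -> meager (fun x => M1 x \/ M2 x).
Proof.
  intros H1 H2.
  apply (meager_subset (fun x => exists i, match i with O => M1 x | _ => M2 x end)).
  - apply meager_nat_union. intros [|i]; auto.
  - intros x [M1x | M2x]; [exists O | exists 1%nat]; auto.
Qed.

Lemma meager_countable_union {I : Type} (M : I -> X -> Prop) :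
  countable_type I -> (forall i, meager (M i)) -> meager (fun x => exists i, M i x).
Proof.
  intros [g Hg] HM.
  apply (meager_subset (fun x => exists n, exists i, g i = n /\ M i x)).
  - apply meager_nat_union. intro n.
    destruct (classic (exists i, g i = n)) as [[i Hi] | Hn].
    + apply (meager_subset (M i)); [apply HM |].
      intros x [j [Hj Mjx]]. replace i with j by (apply Hg; congruence). exact Mjx.
    + apply (meager_subset _ _ meager_empty). intros x [j [Hj _]]. apply Hn; eauto.
  - intros x [i Mix]. exists (g i), i. auto.
Qed.

Lemma baire_property_open (U : X -> Prop) : is_open U -> baire_property U.
Proof.
  intros HU. exists U. split; [exact HU |].
  apply (meager_subset _ _ meager_empty). tauto.
Qed.

Lemma baire_property_ext (A A' : X -> Prop) :
  (forall x, A x <-> A' x) -> baire_property A -> baire_property A'.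
Proof.
  intros HAA' [U [HU HM]]. exists U. split; [exact HU |].
  apply (meager_subset _ _ HM). intros x. rewrite <- HAA'. tauto.
Qed.

Lemma baire_property_compl (A : X -> Prop) :
  baire_property A -> baire_property (fun x => ~ A x).
Proof.
  intros [U [HU HM]]. exists (exterior U). split; [apply open_exterior |].
  apply (meager_subset _ _ (meager_union _ _ HM
                              (meager_nowhere_dense _ (nowhere_dense_frontier U HU)))).
  intros x [[nAx nEx] | [[e [He Hball]] Ax]].
  - destruct (classic (U x)); tauto.
  - left; left. split; [exact (NNPP _ Ax) |]. apply Hball. rewrite dist_refl. exact He.
Qed.

Lemma baire_property_nat_union (A : nat -> X -> Prop) :
  (forall n, baire_property (A n)) -> baire_property (fun x => exists n, A n x).
Proof.
  intros HA. destruct (choice _ HA) as [U HU].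
  exists (fun x => exists n, U n x). split.
  - intros x [n Unx]. destruct (proj1 (HU n) x Unx) as [e [He Hball]].
    exists e. split; [exact He |]. intros y Hy. exists n. auto.
  - apply (meager_subset _ _ (meager_nat_union _ (fun n => proj2 (HU n)))).
    intros x [[[n Anx] nUx] | [[n Unx] nAx]]; exists n.
    + left. split; [exact Anx |]. intro; apply nUx; exists n; auto.
    + right. split; [exact Unx |]. intro; apply nAx; exists n; auto.
Qed.

Lemma borel_baire_property (B : X -> Prop) : borel B -> baire_property B.
Proof.
  intros HB. apply HB.
  - exact baire_property_open.
  - exact baire_property_compl.
  - exact baire_property_nat_union.
  - exact baire_property_ext.
Qed.

End Category.

Section NestedBalls.
Context {X : Polish}.
Variables (c : nat -> X) (r : nat -> R).
Hypothesis r_pos : forall k, 0 < r k.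
Hypothesis r_small : forall k, r (S k) <= / INR (S k).
Hypothesis balls_nested : forall k y, dist (c (S k)) y <= r (S k) -> dist (c k) y <= r k.

Lemma nested_centers (k m : nat) : (k <= m)%nat -> dist (c k) (c m) <= r k.
Proof.
  intros Hkm.
  assert (Hnest : forall j y, dist (c (j + k)) y <= r (j + k) -> dist (c k) y <= r k).
  { induction j as [|j IH]; intros y Hy; [exact Hy |].
    apply IH, balls_nested, Hy. }
  replace m with ((m - k) + k)%nat by lia.
  apply (Hnest (m - k)%nat). rewrite dist_refl. left; apply r_pos.
Qed.

Lemma nested_balls_meet : exists l, forall k, dist (c k) l <= r k.
Proof.
  destruct (dist_complete X c) as [l Hl].
  { intros eps Heps. destruct (archimed_cor1 (eps / 2)) as [M [HM HM0]]; [lra |].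
    exists M. intros m n Hm Hn.
    assert (HrM : r M < eps / 2).
    { destruct M as [|M]; [lia |].
      apply (Rle_lt_trans _ _ _ (r_small M)), (Rle_lt_trans _ (/ INR (S M))); [lra | exact HM]. }
    pose proof (nested_centers M m Hm). pose proof (nested_centers M n Hn).
    pose proof (dist_tri X (c m) (c M) (c n)). rewrite (dist_sym X (c m) (c M)) in *. lra. }
  exists l. intro m. apply Rnot_lt_le. intro Hfar.
  destruct (Hl (dist (c m) l - r m)) as [K HK]; [lra |].
  pose proof (HK (Nat.max K m) (Nat.le_max_l K m)).
  pose proof (nested_centers m (Nat.max K m) (Nat.le_max_r K m)).
  pose proof (dist_tri X (c m) (c (Nat.max K m)) l). lra.
Qed.

End NestedBalls.

Section Baire.
Context {X : Polish}.

Lemma shrink_ball_avoiding (N : X -> Prop) (x : X) (r b : R) :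
  nowhere_dense N -> 0 < r -> 0 < b ->
  exists x' r', 0 < r' /\ r' <= b /\
    forall y, dist x' y <= r' -> dist x y < r /\ ~ N y.
Proof.
  intros HN Hr Hb.
  destruct (HN _ (open_ball x r)) as [V [HV [[x' Vx'] HVsub]]].
  { exists x. rewrite dist_refl. exact Hr. }
  destruct (HV x' Vx') as [e [He Hball]].
  exists x', (Rmin (e / 2) b). split; [apply Rmin_pos; lra | split; [apply Rmin_r |]].
  intros y Hy. apply HVsub, Hball. pose proof (Rmin_l (e / 2) b). lra.
Qed.

Theorem baire_category (U M : X -> Prop) :
  is_open U -> (exists x, U x) -> meager M -> exists x, U x /\ ~ M x.
Proof.
  intros HU [x0 Ux0] [N [HN Hcov]].
  destruct (HU x0 Ux0) as [r0 [Hr0 Hball0]].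
  pose (step k (p p' : X * R) := 0 < snd p ->
          0 < snd p' /\ snd p' <= / INR (S k) /\
          forall y, dist (fst p') y <= snd p' -> dist (fst p) y < snd p /\ ~ N k y).
  assert (Hstep : forall k p, exists p', step k p p').
  { intros k [x r]. destruct (Rlt_dec 0 r) as [Hr | Hr].
    - destruct (shrink_ball_avoiding (N k) x r (/ INR (S k)) (HN k) Hr) as [x' [r' H]].
      { apply Rinv_0_lt_compat, lt_0_INR; lia. }
      exists (x', r'). intros _. exact H.
    - exists (x, r). intro; contradiction. }
  destruct (choice _ (fun k => choice _ (Hstep k))) as [F HF].
  pose (s := fix s k := match k with O => (x0, r0) | S k => F k (s k) end).
  assert (Hpos : forall k, 0 < snd (s k)).
  { induction k as [|k IH]; [exact Hr0 | apply (HF k (s k) IH)]. }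
  assert (Hnext : forall k y, dist (fst (s (S k))) y <= snd (s (S k)) ->
                    dist (fst (s k)) y < snd (s k) /\ ~ N k y).
  { intro k. apply (HF k (s k) (Hpos k)). }
  destruct (nested_balls_meet (fun k => fst (s k)) (fun k => snd (s k))) as [l Hl].
  - exact Hpos.
  - intro k. apply (HF k (s k) (Hpos k)).
  - intros k y Hy. left. apply (Hnext k y Hy).
  - exists l. split.
    + apply Hball0, (Hnext O l (Hl 1%nat)).
    + intros Ml. destruct (Hcov l Ml) as [k Nkl]. apply (Hnext k l (Hl (S k))), Nkl.
Qed.

End Baire.

Section PartialMaps.
Context {X : Polish}.
Variables (dom : X -> Prop) (f : X -> X).

Lemma nowhere_dense_preimage (V N : X -> Prop) :
  partial_cont_open dom f -> is_open V -> (forall z, V z -> dom z) -> nowhere_dense N ->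
  nowhere_dense (fun z => V z /\ N (f z)).
Proof.
  intros [_ [_ [Hcont Hopen]]] HV HVdom HN W HW [w0 Ww0].
  destruct (classic (exists w, W w /\ V w)) as [[w [Ww Vw]] | HWV].
  - assert (HWVo : is_open (fun z => W z /\ V z)) by (apply open_and; auto).
    destruct (HN (fun t => exists z, (W z /\ V z) /\ f z = t)) as [O [HO [[t Ot] HOsub]]].
    + apply Hopen; [exact HWVo | intros z [_ Vz]; auto].
    + exists (f w), w. auto.
    + exists (fun z => (W z /\ V z) /\ O (f z)). split; [| split].
      * apply open_preimage; [exact HWVo | exact HO |].
        intros x [_ Vx] eps Heps. destruct (Hcont x (HVdom x Vx) eps Heps) as [del [Hdel H]].
        exists del. split; [exact Hdel |]. intros x' [_ Vx']. apply H; auto.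
      * destruct (HOsub t Ot) as [[z [WVz <-]] _]. exists z. auto.
      * intros x [[Wx Vx] Ofx]. split; [exact Wx |]. intros [_ Nfx].
        apply (HOsub (f x) Ofx), Nfx.
  - exists W. split; [exact HW | split; [exists w0; exact Ww0 |]].
    intros x Wx. split; [exact Wx |]. intros [Vx _]. apply HWV. eauto.
Qed.

Lemma meager_preimage (V M : X -> Prop) :
  partial_cont_open dom f -> is_open V -> (forall z, V z -> dom z) -> meager M ->
  meager (fun z => V z /\ M (f z)).
Proof.
  intros Hf HV HVdom [N [HN Hcov]]. exists (fun k z => V z /\ N k (f z)). split.
  - intro k. apply nowhere_dense_preimage; auto.
  - intros z [Vz Mfz]. destruct (Hcov _ Mfz) as [k Nk]. exists k. auto.
Qed.

Lemma monochromatic_graph_edge {T : Type} (c : X -> T) (y : T) (U : X -> Prop) :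
  partial_cont_open dom f -> is_open U -> meager (fun x => U x /\ c x <> y) ->
  (exists x, dom x /\ U x /\ U (f x)) -> exists z, dom z /\ c z = y /\ c (f z) = y.
Proof.
  intros Hf HU HM [x Hx].
  pose (V z := (dom z /\ U (f z)) /\ U z).
  assert (HV : is_open V).
  { destruct Hf as [Hdom [_ [Hcont _]]]. apply open_and; [apply open_preimage |]; auto. }
  destruct (baire_category V (fun z => (U z /\ c z <> y) \/ (V z /\ (U (f z) /\ c (f z) <> y))))
    as [z [Vz Hz]].
  - exact HV.
  - exists x. unfold V. tauto.
  - apply meager_union; [exact HM |]. apply (meager_preimage V (fun t => U t /\ c t <> y)); auto.
    intros z [[Dz _] _]. exact Dz.
  - exists z. destruct Vz as [[Dz Ufz] Uz].
    split; [exact Dz |]. split; apply NNPP; intro; apply Hz; [left | right; unfold V]; tauto.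
Qed.

Lemma open_deep_in (x : X) : is_open dom -> dom x -> exists k, deep_in dom (/ INR (S k)) x.
Proof.
  intros Hdom Dx. destruct (Hdom x Dx) as [e [He Hball]].
  destruct (archimed_cor1 e He) as [k [Hk Hk0]]. exists k.
  intros z Hz. apply Hball. apply (Rlt_trans _ _ _ Hz), (Rle_lt_trans _ (/ INR k)); [| exact Hk].
  apply Rinv_le_contravar; [apply lt_0_INR; lia | apply le_INR; lia].
Qed.

Lemma closed2_deep_graph (r : R) :
  continuous_on dom f -> 0 < r -> is_closed2 (fun x y => deep_in dom r x /\ f x = y).
Proof.
  intros Hcont Hr x y Hxy. destruct (classic (deep_in dom r x)) as [Hdeep | Hshallow].
  - assert (Hd : 0 < dist (f x) y) by (apply dist_pos; intro; apply Hxy; auto).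
    assert (Dx : dom x) by (apply Hdeep; rewrite dist_refl; exact Hr).
    destruct (Hcont x Dx (dist (f x) y / 2)) as [del [Hdel Hc]]; [lra |].
    exists (Rmin del (dist (f x) y / 2)). split; [apply Rmin_pos; lra |].
    intros x' y' Hx' Hy' [Hdeep' <-].
    pose proof (Rmin_l del (dist (f x) y / 2)). pose proof (Rmin_r del (dist (f x) y / 2)).
    assert (Dx' : dom x') by (apply Hdeep'; rewrite dist_refl; exact Hr).
    pose proof (Hc x' Dx' ltac:(lra)).
    pose proof (dist_tri X (f x) (f x') y). rewrite (dist_sym X (f x') y) in *. lra.
  - apply not_all_ex_not in Hshallow. destruct Hshallow as [z Hz].
    apply imply_to_and in Hz. destruct Hz as [Hxz nDz].
    exists (r - dist x z). split; [lra |].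
    intros x' y' Hx' _ [Hdeep' _]. apply nDz, Hdeep'.
    pose proof (dist_tri X x' x z). rewrite (dist_sym X x' x) in *. lra.
Qed.

End PartialMaps.

Lemma sigma02_Af {X : Polish} (dom : nat -> X -> Prop) (f : nat -> X -> X) :
  (forall n, partial_cont_open (dom n) (f n)) -> Sigma02 (Af dom f).
Proof.
  intros Hpc.
  exists (fun m x y => let (n, k) := of_nat m in deep_in (dom n) (/ INR (S k)) x /\ f n x = y).
  split.
  - intro m. destruct (of_nat m) as [n k]. destruct (Hpc n) as [_ [_ [Hcont _]]].
    apply closed2_deep_graph; [exact Hcont |]. apply Rinv_0_lt_compat, lt_0_INR; lia.
  - intros x y. split.
    + intros [n [Dx <-]]. destruct (open_deep_in (dom n) x (proj1 (Hpc n)) Dx) as [k Hk].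
      exists (to_nat (n, k)). rewrite cancel_of_to. auto.
    + intros [m Hm]. destruct (of_nat m) as [n k]. destruct Hm as [Hdeep Hfx].
      exists n. split; [| exact Hfx]. apply Hdeep. rewrite dist_refl.
      apply Rinv_0_lt_compat, lt_0_INR; lia.
Qed.

Section Colourings.
Context {X : Polish}.

Lemma borel_fibre {Y : Polish} (c : X -> Y) (y : Y) :
  borel_fun c -> borel (fun x => c x = y).
Proof.
  intros Hc S Sopen Scompl Sunion Sext.
  apply (Sext (fun x => ~ c x <> y)); [intro x; split; [apply NNPP | tauto] |].
  apply Scompl, (Hc (fun z => z <> y)); auto.
  intros z Hz. exists (dist z y). split; [apply dist_pos, Hz |].
  intros w Hw <-. lra.
Qed.

Lemma comeager_fibre {Y : Type} (c : X -> Y) :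
  inhabited X -> countable_type Y -> (forall y, baire_property (fun x => c x = y)) ->
  exists y U, is_open U /\ (exists x, U x) /\ meager (fun x => U x /\ c x <> y).
Proof.
  intros [x0] HY HB. apply NNPP. intros Hnone.
  assert (Hfibre : forall y, meager (fun x => c x = y)).
  { intro y. destruct (HB y) as [U [HU HM]].
    destruct (classic (exists x, U x)) as [HUne | HUempty].
    - exfalso. apply Hnone. exists y, U. split; [exact HU | split; [exact HUne |]].
      apply (meager_subset _ _ HM). tauto.
    - apply (meager_subset _ _ HM). intros x Hx. left. split; [exact Hx |].
      intro Ux. apply HUempty. eauto. }
  destruct (baire_category (fun _ => True) (fun x => exists y, c x = y)) as [x [_ Hx]].
  - intros x _. exists 1. split; [lra | auto].
  - exists x0. exact I.
  - apply meager_countable_union; auto.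
  - apply Hx. eauto.
Qed.

End Colourings.

Theorem corollary2p2 (X : Polish) (dom : nat -> X -> Prop) (f : nat -> X -> X) :
  complex_situation X dom f ->
  digraph (Af dom f) /\ Sigma02 (Af dom f) /\ uncountable_borel_chromatic (Af dom f).
Proof.
  intros [Hinh [Hpc Hdiag]]. split; [| split].
  - intro x. apply Hdiag.
  - apply sigma02_Af, Hpc.
  - intros Y c HY Hc.
    destruct (comeager_fibre c Hinh HY) as [y [U [HU [[x0 Ux0] HM]]]].
    { intro y. apply borel_baire_property, borel_fibre, Hc. }
    destruct (edge_near_diagonal _ U x0 HU Ux0 (proj1 (Hdiag x0)))
      as [x [x' [Ux [Ux' [n [Dx Hfx]]]]]].
    destruct (monochromatic_graph_edge (dom n) (f n) c y U) as [z [Dz [Hcz Hcfz]]]; auto.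
    { exists x. subst x'. auto. }
    exists z, (f n z). split; [exists n; split; auto | congruence].
Qed.
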